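(* Let $f:\mathbb{R}^m\times\mathbb{R}\to\mathbb{R}^m$ be Lipschitz continuous and let $y$ solve the initial value problem $\dot y = f(y,t)$, $t\in(0,T]$, $y(0)=y_0$. Let $S$ be a linear functional on $\mathbb{R}^m$ satisfying the Lipschitz condition $|S(y_1(t))-S(y_2(t))|\le K\|y_1(t)-y_2(t)\|_{\mathbb{R}^m}$ for some constant $K>0$. Let $Y(t)$ be a continuous numerical approximation of $y$ computed with step-size $h$ such that $$\|y(t)-Y(t)\|_{\mathbb{R}^m}\le C h^p\quad\text{for all } t\in[0,T],$$ for some constant $C>0$. For a threshold value $R$, let $t_t=\min_{t\in(0,T]}\arg(S(y(t))=R)$ and $t_c=\min_{t\in(0,T]}\arg(S(Y(t))=R)$ (so that $S(y(t_t))=R=S(Y(t_c))$), and let $e_Q=t_t-t_c$. Assume that $t\mapsto S(y(t))$ is continuously differentiable in a neighborhood $B$ which contains both $t_t$ and $t_c$, and that there exists $M>0$ such that $\left|\frac{dS}{dt}(y(t))\right|>M$ for all $t\in B$. Then $$e_Q\le \widehat{C}h^p$$ for some constant $\widehat{C}$ which depends on $M$, $C$ and $K$.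
   Context: $\|\cdot\|_{\mathbb{R}^m}$ is the Euclidean norm. It is assumed that the threshold $S(y(t))=R$ is crossed at some time in $(0,T)$, so $t_t$ exists; likewise $t_c$ is the first time the computed functional reaches $R$. *)

From Stdlib Require Import Reals List.
From Coquelicot Require Import Coquelicot.
Import ListNotations.
Open Scope R_scope.

(* A vector of R^m is represented by its components x 0, ..., x (m-1);
   components of index >= m are ignored by everything below. *)
Definition vec := nat -> R.

Definition vsub (x y : vec) : vec := fun i => x i - y i.

Definition enorm (m : nat) (x : vec) : R :=
  sqrt (fold_right Rplus 0 (map (fun i => (x i) ^ 2) (seq 0 m))).

Definition lipschitz_field (m : nat) (f : vec -> R -> vec) : Prop :=
  exists L : R, 0 <= L /\
    forall (u v : vec) (t : R), enorm m (vsub (f u t) (f v t)) <= L * enorm m (vsub u v).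

Definition is_derive_within (D : R -> Prop) (g : R -> R) (t l : R) : Prop :=
  filterlim (fun s => (g s - g t) / (s - t))
            (within (fun s => D s /\ s <> t) (locally t)) (locally l).

Definition solves_ivp (m : nat) (f : vec -> R -> vec) (T : R) (y0 : vec)
    (y : R -> vec) : Prop :=
  (forall i, (i < m)%nat -> y 0 i = y0 i) /\
  (forall i, (i < m)%nat -> forall t, 0 <= t <= T ->
      filterlim (fun s => y s i) (within (fun s => 0 <= s <= T) (locally t)) (locally (y t i))) /\
  (forall i, (i < m)%nat -> forall t, 0 < t <= T ->
      is_derive_within (fun s => 0 < s <= T) (fun s => y s i) t (f (y t) t i)).

Definition linear_functional (m : nat) (S : vec -> R) : Prop :=
  (forall x y : vec, (forall i, (i < m)%nat -> x i = y i) -> S x = S y) /\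
  (forall (a b : R) (x y : vec), S (fun i => a * x i + b * y i) = a * S x + b * S y).

Definition continuous_on_0T (m : nat) (T : R) (Y : R -> vec) : Prop :=
  forall i, (i < m)%nat -> forall t, 0 <= t <= T ->
    filterlim (fun s => Y s i) (within (fun s => 0 <= s <= T) (locally t)) (locally (Y t i)).

Definition first_hit (g : R -> R) (Rth T t : R) : Prop :=
  0 < t <= T /\ g t = Rth /\ forall s, 0 < s < t -> g s <> Rth.

(* The crossing time of the computed solution is read off the exact one: at t_c,
   S(y(t_c)) differs from S(Y(t_c)) = R = S(y(t_t)) by at most K C h^p, while by the
   mean value theorem |S(y(t_t)) - S(y(t_c))| >= M |t_t - t_c|.  Hence
   |t_t - t_c| <= (K C / M) h^p. *)

From Stdlib Require Import Reals Lra.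
From Coquelicot Require Import Coquelicot.
Open Scope R_scope.

Lemma between_in_interval (a b x1 x2 x : R) :
  a < x1 < b -> a < x2 < b -> Rmin x1 x2 <= x <= Rmax x1 x2 -> a < x < b.
Proof. unfold Rmin, Rmax; destruct (Rle_dec x1 x2); lra. Qed.

Lemma Rabs_sub_ge_of_Derive_ge (g : R -> R) (a b M x1 x2 : R) :
  (forall t, a < t < b -> ex_derive g t) ->
  (forall t, a < t < b -> M <= Rabs (Derive g t)) ->
  a < x1 < b -> a < x2 < b ->
  M * Rabs (x1 - x2) <= Rabs (g x1 - g x2).
Proof.
  intros Hder Hbound Hx1 Hx2.
  assert (Hin : forall x, Rmin x2 x1 <= x <= Rmax x2 x1 -> a < x < b).
  { intros x Hx. apply (between_in_interval a b x2 x1); assumption. }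
  destruct (MVT_gen g x2 x1 (Derive g)) as [c [Hc Hmvt]].
  - intros x Hx. apply Derive_correct, Hder, Hin. lra.
  - intros x Hx. apply continuity_pt_filterlim.
    apply (ex_derive_continuous (K := R_AbsRing) (V := R_NormedModule)), Hder, Hin, Hx.
  - rewrite Hmvt, Rabs_mult.
    apply Rmult_le_compat_r; [apply Rabs_pos |].
    apply Hbound, Hin, Hc.
Qed.

Lemma Rabs_sub_level_le (m : nat) (S : vec -> R) (K e : R) (u v w : vec) :
  (forall x z : vec, Rabs (S x - S z) <= K * enorm m (vsub x z)) -> 0 <= K ->
  S u = S v -> enorm m (vsub w v) <= e ->
  Rabs (S u - S w) <= K * e.
Proof.
  intros HS HK Huv Hwv.
  rewrite Huv, Rabs_minus_sym.
  apply (Rle_trans _ _ _ (HS w v)).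
  apply Rmult_le_compat_l; assumption.
Qed.

Theorem theorem1 :
  exists Chat : R -> R -> R -> R,
  forall (m : nat) (f : vec -> R -> vec) (T : R) (y0 : vec) (y : R -> vec)
         (S : vec -> R) (K : R) (Y : R -> vec) (h p C Rth tt tc : R)
         (a b M : R),
    0 < T ->
    lipschitz_field m f ->
    solves_ivp m f T y0 y ->
    linear_functional m S ->
    0 < K ->
    (forall u v : vec, Rabs (S u - S v) <= K * enorm m (vsub u v)) ->
    0 < h -> 0 < p -> 0 < C ->
    continuous_on_0T m T Y ->
    (forall t, 0 <= t <= T -> enorm m (vsub (y t) (Y t)) <= C * Rpower h p) ->
    first_hit (fun t => S (y t)) Rth T tt ->
    first_hit (fun t => S (Y t)) Rth T tc ->
    (* B = (a,b) is a neighbourhood containing tt and tc *)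
    a < tt < b -> a < tc < b ->
    (forall t, a < t < b ->
       ex_derive (fun s => S (y s)) t /\
       continuous (Derive (fun s => S (y s))) t) ->
    0 < M ->
    (forall t, a < t < b -> Rabs (Derive (fun s => S (y s)) t) > M) ->
    Rabs (tt - tc) <= Chat M C K * Rpower h p.
Proof.
  exists (fun M C K => K * C / M).
  intros m f T y0 y S K Y h p C Rth tt tc a b M _ _ _ _ HK HS _ _ _ _ Herr
    [_ [Htt _]] [Htc_0T [Htc _]] Htt_ab Htc_ab Hder HM Hbound.
  assert (Hgap : Rabs (S (y tt) - S (y tc)) <= K * (C * Rpower h p)).
  { apply (Rabs_sub_level_le m S K _ (y tt) (Y tc) (y tc) HS).
    - lra.
    - cbv beta in Htt, Htc. rewrite Htt, Htc. reflexivity.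
    - apply Herr. lra. }
  assert (Hmvt := Rabs_sub_ge_of_Derive_ge (fun s => S (y s)) a b M tt tc
    (fun t Ht => proj1 (Hder t Ht)) (fun t Ht => Rlt_le _ _ (Hbound t Ht))
    Htt_ab Htc_ab).
  apply (Rmult_le_reg_l M); [exact HM |].
  replace (M * (K * C / M * Rpower h p)) with (K * (C * Rpower h p)) by (field; lra).
  apply (Rle_trans _ _ _ Hmvt Hgap).
Qed.
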